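(* Let $\mathcal{X}=L^p$ for some $p\in\{0,1,\infty\}$, let $\varphi$ be a dynamic LM-measure on $\mathcal{X}$ and let $\mu$ be a projective update rule. If $\varphi$ is $\mu$-acceptance time consistent, then $\varphi$ is weakly acceptance time consistent, i.e. for all $X\in\mathcal{X}$, $s>t$, $m_s\in\bar L^0_s$: $\varphi_s(X)\ge m_s\Rightarrow\varphi_t(X)\ge\operatorname{Essinf}_tm_s$. If $\varphi$ is $\mu$-rejection time consistent, then $\varphi$ is weakly rejection time consistent, i.e. $\varphi_s(X)\le m_s\Rightarrow\varphi_t(X)\le\operatorname{Esssup}_tm_s$ for all such $X,s,t,m_s$.
   Context: Let $(\Omega,\mathcal{F},\{\mathcal{F}_t\}_{t\in\mathbb{T}},P)$ be a filtered probability space, $\mathbb{T}=\{0,\dots,T\}$, $\mathcal{F}_0$ trivial. $\bar L^0_t$ denotes $\mathcal{F}_t$-measurable random variables with values in $[-\infty,\infty]$, $\bar L^0=\bar L^0_T$, $L^p=L^p(\Omega,\mathcal{F}_T,P)$. A dynamic LM-measure is a family $\{\varphi_t\}_{t\in\mathbb{T}}$ of maps $\varphi_t:\mathcal{X}\to\bar L^0_t$ with $1_A\varphi_t(X)=1_A\varphi_t(1_AX)$ for $A\in\mathcal{F}_t$ and $X\le Y\Rightarrow\varphi_t(X)\le\varphi_t(Y)$. An update rule is a family $\{\mu_{t,s}:s>t\}$ of maps $\mu_{t,s}:\bar L^0_s\times\mathcal{X}\to\bar L^0_t$ with $1_A\mu_{t,s}(m,X)=1_A\mu_{t,s}(1_Am,X)$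 for $A\in\mathcal{F}_t$ and $m\ge m'\Rightarrow\mu_{t,s}(m,X)\ge\mu_{t,s}(m',X)$; it is projective if there are maps $\mu_t:\bar L^0\to\bar L^0_t$ with $\mu_{t,s}(m,X)=\mu_t(m)$ for all $s>t$, $X$, $m\in\bar L^0_s$, and $\mu_t(m_t)=m_t$ for $m_t\in\bar L^0_t$. $\varphi$ is $\mu$-acceptance (resp. $\mu$-rejection) time consistent if for all $s>t$, $X$, $m_s\in\bar L^0_s$: $\varphi_s(X)\ge m_s\Rightarrow\varphi_t(X)\ge\mu_{t,s}(m_s,X)$ (resp. with $\le$). $\operatorname{Essinf}_t$ on bounded variables: the largest $\mathcal{F}_t$-measurable random variable a.s. dominated by the argument; on $\bar L^0$: $\operatorname{Essinf}_tX:=\lim_n\operatorname{Essinf}_t(X^+\wedge n)-\lim_n\operatorname{Esssup}_t(X^-\wedge n)$, with $\operatorname{Esssup}_tX=-\operatorname{Essinf}_t(-X)$ and convention $\infty-\infty=-\infty$. *)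

From HB Require Import structures.
From mathcomp Require Import all_boot all_order all_algebra.
From mathcomp Require Import all_classical all_reals all_analysis.
From mathcomp Require Import measurable_realfun.
From Stdlib Require Import ClassicalEpsilon.
Set Implicit Arguments. Unset Strict Implicit. Unset Printing Implicit Defensive.
Import Order.TTheory GRing.Theory Num.Theory.
Local Open Scope classical_set_scope.
Local Open Scope ring_scope.
Local Open Scope ereal_scope.

Section LM.
Context (d : measure_display) (Omega : measurableType d) (R : realType)
  (P : probability Omega R) (F : nat -> set (set Omega)) (T : nat).

Definition as_le (f g : Omega -> \bar R) : Prop :=
  almost_everywhere P (fun w => f w <= g w).
Definition as_eq (f g : Omega -> \bar R) : Prop :=
  almost_everywhere P (fun w => f w = g w).
Definition as_leR (f g : Omega -> R) : Prop :=
  almost_everywhere P (fun w => (f w <= g w)%R).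

Definition filtration : Prop :=
  (forall t, (t <= T)%N -> sigma_algebra setT (F t)) /\
  (forall t, (t <= T)%N -> forall A, F t A -> measurable A) /\
  (forall t s, (t <= s <= T)%N -> forall A, F t A -> F s A) /\
  (forall A, F 0%N A -> A = set0 \/ A = setT).

Definition L0bar (t : nat) (f : Omega -> \bar R) : Prop :=
  forall B : set (\bar R), measurable B -> F t (f @^-1` B).

Definition L0R (t : nat) (X : Omega -> R) : Prop :=
  forall B : set R, measurable B -> F t (X @^-1` B).

Inductive pexp := p0 | p1 | pinf.

Definition Lp (p : pexp) (X : Omega -> R) : Prop :=
  match p with
  | p0 => L0R T X
  | p1 => L0R T X /\ P.-integrable setT (EFin \o X)
  | pinf => L0R T X /\ exists C : R, as_leR (fun w => `|X w|%R) (fun _ => C)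
  end.

Definition indicE (A : set Omega) (w : Omega) : \bar R := (\1_A w)%:E.

Definition dynamic_LM (p : pexp) (phi : nat -> (Omega -> R) -> (Omega -> \bar R)) :=
  (forall t X, (t <= T)%N -> Lp p X -> L0bar t (phi t X)) /\
  (forall t X A, (t <= T)%N -> Lp p X -> F t A ->
     as_eq (fun w => indicE A w * phi t X w)
           (fun w => indicE A w * phi t (fun v => (\1_A v * X v)%R) w)) /\
  (forall t X Y, (t <= T)%N -> Lp p X -> Lp p Y -> as_leR X Y ->
     as_le (phi t X) (phi t Y)).

Definition update_rule (p : pexp)
  (mu : nat -> nat -> (Omega -> \bar R) -> (Omega -> R) -> (Omega -> \bar R)) :=
  (forall t s m X, (t < s <= T)%N -> L0bar s m -> Lp p X ->
     L0bar t (mu t s m X)) /\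
  (forall t s m X A, (t < s <= T)%N -> L0bar s m -> Lp p X -> F t A ->
     as_eq (fun w => indicE A w * mu t s m X w)
           (fun w => indicE A w * mu t s (fun v => indicE A v * m v) X w)) /\
  (forall t s m m' X, (t < s <= T)%N -> L0bar s m -> L0bar s m' -> Lp p X ->
     as_le m' m -> as_le (mu t s m' X) (mu t s m X)).

Definition projective (p : pexp)
  (mu : nat -> nat -> (Omega -> \bar R) -> (Omega -> R) -> (Omega -> \bar R)) :=
  exists mut : nat -> (Omega -> \bar R) -> (Omega -> \bar R),
    (forall t m, (t <= T)%N -> L0bar T m -> L0bar t (mut t m)) /\
    (forall t s m X, (t < s <= T)%N -> L0bar s m -> Lp p X ->
       as_eq (mu t s m X) (mut t m)) /\
    (forall t m, (t <= T)%N -> L0bar t m -> as_eq (mut t m) m).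

Definition mu_acc_tc (p : pexp) phi mu :=
  forall X t s m, (t < s <= T)%N -> Lp p X -> L0bar s m ->
    as_le m (phi s X) -> as_le (mu t s m X) (phi t X).

Definition mu_rej_tc (p : pexp) phi mu :=
  forall X t s m, (t < s <= T)%N -> Lp p X -> L0bar s m ->
    as_le (phi s X) m -> as_le (phi t X) (mu t s m X).

(* Essinf_t on bounded variables: the largest F_t-measurable random variable
   a.s. dominated by the argument (chosen by Hilbert's epsilon). *)
Definition is_essinf_bdd (t : nat) (X Y : Omega -> \bar R) : Prop :=
  L0bar t Y /\ as_le Y X /\ (forall Z, L0bar t Z -> as_le Z X -> as_le Z Y).

Definition essinf_bdd (t : nat) (X : Omega -> \bar R) : Omega -> \bar R :=
  epsilon (inhabits (fun _ => -oo)) (is_essinf_bdd t X).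

Definition esssup_bdd (t : nat) (X : Omega -> \bar R) : Omega -> \bar R :=
  fun w => - essinf_bdd t (fun v => - X v) w.

(* Essinf_t on \bar L^0:
   lim_n Essinf_t (X^+ /\ n) - lim_n Esssup_t (X^- /\ n), the (a.s.
   nondecreasing) limits being written as suprema; +oo - +oo = -oo in
   mathcomp's extended reals, matching the paper's convention. *)
Definition Essinf (t : nat) (X : Omega -> \bar R) : Omega -> \bar R :=
  fun w =>
    ereal_sup (range (fun n : nat =>
       essinf_bdd t (fun v => mine (maxe (X v) 0) n%:R%:E) w))
  - ereal_sup (range (fun n : nat =>
       esssup_bdd t (fun v => mine (maxe (- X v) 0) n%:R%:E) w)).

Definition Esssup (t : nat) (X : Omega -> \bar R) : Omega -> \bar R :=
  fun w => - Essinf t (fun v => - X v) w.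

Definition weak_acc_tc (p : pexp) phi :=
  forall X t s m, (t < s <= T)%N -> Lp p X -> L0bar s m ->
    as_le m (phi s X) -> as_le (Essinf t m) (phi t X).

Definition weak_rej_tc (p : pexp) phi :=
  forall X t s m, (t < s <= T)%N -> Lp p X -> L0bar s m ->
    as_le (phi s X) m -> as_le (phi t X) (Esssup t m).

End LM.

(* For a projective update rule, mu_{t,s}(m, X) = mu_t(m) = m as soon as m is
   F_t-measurable (such an m is also F_s-measurable).  Applying mu-acceptance
   consistency to the F_t-measurable threshold Essinf_t m_s, which lies a.s.
   below m_s and hence below phi_s(X), therefore gives
   Essinf_t m_s <= phi_t(X); rejection is symmetric, with Esssup_t m_s.
   It remains to see that Essinf_t m is F_t-measurable and a.s. below m.  For
   X with values in [a, b], the pointwise supremum of a maximising sequence is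
   an F_t-measurable minorant Y of X maximising E[Y - a]; for any other such
   minorant Z, max(Y, Z) is again one, with the same expectation, so Z <= Y
   a.s. *)

From HB Require Import structures.
From mathcomp Require Import all_boot all_order all_algebra.
From mathcomp Require Import all_classical all_reals all_analysis.
From mathcomp Require Import measurable_realfun.
From Stdlib Require Import ClassicalEpsilon.
Set Implicit Arguments. Unset Strict Implicit. Unset Printing Implicit Defensive.
Import Order.TTheory GRing.Theory Num.Theory.
Local Open Scope classical_set_scope.
Local Open Scope ring_scope.
Local Open Scope ereal_scope.

Section Clip.
Context (R : realType) (a b : R).

Definition clip (x : \bar R) := mine (maxe x a%:E) b%:E.

Lemma clip_ge x : (a <= b)%R -> a%:E <= clip x.
Proof. by move=> ab; rewrite /clip le_min le_max lexx orbT lee_fin ab. Qed.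

Lemma clip_le x : clip x <= b%:E.
Proof. by rewrite /clip ge_min lexx orbT. Qed.

Lemma clip_fin_num x : (a <= b)%R -> clip x \is a fin_num.
Proof.
move=> ab; rewrite fin_numElt (lt_le_trans (ltNyr a) (clip_ge _ ab)).
exact: le_lt_trans (clip_le _) (ltry b).
Qed.

Lemma le_clip x y : x <= y -> clip x <= clip y.
Proof. by move=> xy; apply: le_min2 => //; apply: le_max2. Qed.

Lemma clip_id x : a%:E <= x <= b%:E -> clip x = x.
Proof. by case/andP=> ax xb; rewrite /clip (max_l ax) (min_l xb). Qed.

Lemma clip_le_ge x y : x <= y -> a%:E <= y -> clip x <= y.
Proof. by move=> xy ay; rewrite /clip ge_min ge_max xy ay. Qed.

End Clip.

Lemma le_ereal_sup_mine (R : realType) (x : \bar R) (u : nat -> \bar R) :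
  (forall n, mine x n%:R%:E <= u n) -> x <= ereal_sup (range u).
Proof.
move=> xu; have {}xu n : mine x n%:R%:E <= ereal_sup (range u).
  by apply: le_trans (xu n) _; apply: ereal_sup_ubound; exists n.
case: x xu => [r| |] xu; last exact: leNye.
- by have := xu (Num.truncn r).+1; rewrite min_l // lee_fin ltW // truncnS_gt.
- move: xu; case: (ereal_sup _) => [s| |] xu //.
  + have := xu (Num.truncn s).+1.
    by rewrite min_r ?leey // lee_fin leNgt truncnS_gt.
  + by have := xu 0%N; rewrite min_r ?leey.
Qed.

Section MeasurableSup.
Context d (S : measurableType d) (R : realType).

Lemma measurable_fun_ereal_sup_range (f : nat -> S -> \bar R) :
  (forall n, measurable_fun setT (f n)) ->
  measurable_fun setT (fun w => ereal_sup (range (f ^~ w))).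
Proof.
move=> mf; have := measurable_fun_esups mf 0.
congr measurable_fun; apply: funext => w; rewrite /esups /sdrop /=.
by congr ereal_sup; apply/seteqP; split => x [k _ <-]; exists k.
Qed.

Lemma ae_eq_ge0_le_integral (mu : {measure set S -> \bar R}) (f g : S -> \bar R) :
  measurable_fun setT f -> measurable_fun setT g ->
  (forall x, 0 <= f x) -> (forall x, f x \is a fin_num) ->
  (forall x, f x <= g x) -> \int[mu]_x f x \is a fin_num ->
  \int[mu]_x g x <= \int[mu]_x f x -> ae_eq mu setT g f.
Proof.
move=> mf mg f0 ffin fg intf gf.
have gf0 x : 0 <= g x - f x by rewrite sube_ge0 ?ffin.
have mgf : measurable_fun setT (fun x => g x - f x) by exact: emeasurable_funB.
have intg : \int[mu]_x g x = \int[mu]_x f x + \int[mu]_x (g x - f x).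
  rewrite -ge0_integralD //; apply: eq_integral => x _.
  by rewrite addeC subeK ?ffin.
have int0 : \int[mu]_x (g x - f x) = 0.
  apply/eqP; rewrite eq_le integral_ge0 // andbT.
  by rewrite -(leeD2lE _ _ intf) adde0 -intg.
have : ae_eq mu setT (fun x => g x - f x) (cst 0).
  apply/(ae_eq_integral_abs mu measurableT mgf).
  by rewrite -int0; apply: eq_integral => x _; rewrite gee0_abs.
apply: filterS => x /[apply] /= gf_eq0.
by rewrite -[g x](@subeK _ _ (f x)) ?ffin // gf_eq0 add0e.
Qed.

End MeasurableSup.

Section Filtration.
Context d (Omega : measurableType d) (R : realType) (P : probability Omega R)
  (F : nat -> set (set Omega)) (T : nat) (hF : filtration F T).

Lemma L0barP t (f : Omega -> \bar R) : (t <= T)%N ->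
  L0bar F t f <-> measurable_fun (setT : set (g_sigma_algebraType (F t))) f.
Proof.
move=> tT; have Ft : measurable = F t :> set (set (g_sigma_algebraType (F t))).
  exact: sigma_algebra_id (hF.1 t tT).
split=> [Lf _ B mB | mf B mB]; first by rewrite setTI Ft; exact: Lf.
by have := mf measurableT B mB; rewrite setTI Ft.
Qed.

Lemma L0bar_measurable t (f : Omega -> \bar R) : (t <= T)%N ->
  L0bar F t f -> measurable_fun setT f.
Proof. by move=> tT Lf _ B mB; rewrite setTI; exact: hF.2.1 t tT _ (Lf B mB). Qed.

Lemma L0bar_mono t s (f : Omega -> \bar R) : (t <= s <= T)%N ->
  L0bar F t f -> L0bar F s f.
Proof. by move=> tsT Lf B mB; exact: hF.2.2.1 t s tsT _ (Lf B mB). Qed.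

Section EssinfBounded.
Context (t : nat) (tT : (t <= T)%N) (a b : R) (ab : (a <= b)%R)
  (X : Omega -> \bar R) (Xa : forall w, a%:E <= X w) (Xb : forall w, X w <= b%:E).

Let minorant (Z : Omega -> \bar R) := L0bar F t Z /\ as_le P Z X.

(* Clipping keeps [mass] finite and nonnegative, also for minorants of X that
   are not bounded below. *)
Let mass (Z : Omega -> \bar R) := \int[P]_w (clip a b (Z w) - a%:E).

Let clip_subr_ge0 x : 0 <= clip a b x - a%:E.
Proof. by rewrite sube_ge0 // clip_ge. Qed.

Let measurable_clip_subr Z : L0bar F t Z ->
  measurable_fun setT (fun w => clip a b (Z w) - a%:E).
Proof.
move=> LZ; apply: emeasurable_funB => //.
apply: measurable_mine => //; apply: measurable_maxe => //.
exact: L0bar_measurable LZ.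
Qed.

Let mass_le Z : L0bar F t Z -> mass Z <= (b - a)%:E.
Proof.
move=> LZ; apply: le_trans (_ : \int[P]_w (cst (b - a)%:E) w <= _).
  apply: ge0_le_integral => //; first exact: measurable_clip_subr.
  by move=> w _; rewrite /= EFinB EFinN; apply: leeB => //; exact: clip_le.
by rewrite integral_cst // [X in _ * X]probability_setT mule1.
Qed.

Let mass_fin_num Z : L0bar F t Z -> mass Z \is a fin_num.
Proof.
move=> LZ; rewrite ge0_fin_numE ?integral_ge0 //.
exact: le_lt_trans (mass_le LZ) (ltry _).
Qed.

Let sup_clip (Zs : nat -> Omega -> \bar R) w :=
  ereal_sup (range (fun k => clip a b (Zs k w))).

Let sup_clip_bounds Zs w : a%:E <= sup_clip Zs w <= b%:E.
Proof.
apply/andP; split; last by apply: ge_ereal_sup => _ [k _ <-]; exact: clip_le.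
by apply: le_trans (clip_ge (Zs 0%N w) ab) _; apply: ereal_sup_ubound; exists 0%N.
Qed.

Let minorant_sup_clip Zs : (forall k, minorant (Zs k)) -> minorant (sup_clip Zs).
Proof.
move=> mZs; split.
  apply/(L0barP _ tT)/measurable_fun_ereal_sup_range => k.
  apply: measurable_mine => //; apply: measurable_maxe => //.
  exact/(L0barP _ tT)/(mZs k).1.
have : \forall w \ae P, forall k, Zs k w <= X w.
  by apply: ae_foralln => k; exact: (mZs k).2.
apply: filterS => w ZsX; apply: ge_ereal_sup => _ [k _ <-].
exact: clip_le_ge.
Qed.

Let mass_maximizer_exists : exists2 Y, minorant Y /\ (forall w, a%:E <= Y w <= b%:E)
  & forall Z, minorant Z -> mass Z <= mass Y.
Proof.
pose c := ereal_sup [set mass Z | Z in minorant].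
have minorant_a : minorant (fun _ => a%:E).
  by split; [exact/(L0barP _ tT) | exact: aeW].
have c_fin : c \is a fin_num.
  have mass_a_le_c : mass (fun _ => a%:E) <= c.
    by apply: ereal_sup_ubound; exists (fun _ => a%:E).
  rewrite ge0_fin_numE; last exact: le_trans (integral_ge0 _ _) mass_a_le_c.
  apply: le_lt_trans (ltry (b - a)); apply: ge_ereal_sup => _ [Z [LZ _] <-].
  exact: mass_le.
have approx k : exists Z, minorant Z /\ c - (k.+1%:R^-1)%:E < mass Z.
  have k_gt0 : (0 < k.+1%:R^-1 :> R)%R by rewrite invr_gt0.
  by have [_ [Z mZ <-] lt] := ub_ereal_sup_adherent k_gt0 c_fin; exists Z.
have [Zs hZs] := boolp.choice approx.
have mY := minorant_sup_clip (fun k => (hZs k).1).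
exists (sup_clip Zs) => // Z mZ.
apply: le_trans (_ : c <= _); first by apply: ereal_sup_ubound; exists Z.
apply/lee_subgt0Pr => e e0.
have [k ke] : exists k, (k.+1%:R^-1 < e)%R.
  exists (Num.truncn e^-1); rewrite invf_plt ?posrE //; exact: truncnS_gt.
apply: le_trans (_ : c - (k.+1%:R^-1)%:E <= _); first by rewrite leeB // lee_fin ltW.
apply: le_trans (ltW (hZs k).2) _; apply: ge0_le_integral => //.
- exact: measurable_clip_subr (hZs k).1.1.
- exact: measurable_clip_subr mY.1.
- move=> w _; apply: leeB => //; rewrite (clip_id (sup_clip_bounds Zs w)).
  by apply: ereal_sup_ubound; exists k.
Qed.

Let minorant_le_mass_maximizer Y Z :
  minorant Y -> (forall w, a%:E <= Y w <= b%:E) ->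
  (forall Z, minorant Z -> mass Z <= mass Y) -> minorant Z -> as_le P Z Y.
Proof.
move=> mY Y_bnd Ymax mZ.
pose W w := maxe (Y w) (Z w).
have mW : minorant W.
  split; last by apply: filterS2 mY.2 mZ.2 => w YX ZX; rewrite ge_max YX ZX.
  by apply/(L0barP _ tT)/measurable_maxe; apply/(L0barP _ tT); [exact: mY.1 | exact: mZ.1].
have clipW_eq : ae_eq P setT (fun w => clip a b (W w) - a%:E)
                             (fun w => clip a b (Y w) - a%:E).
  apply: ae_eq_ge0_le_integral; rewrite ?(mass_fin_num mY.1) ?Ymax //.
  - exact: measurable_clip_subr mY.1.
  - exact: measurable_clip_subr mW.1.
  - by move=> w; rewrite fin_numB clip_fin_num.
  - by move=> w; rewrite leeB // le_clip // le_max lexx.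
apply: filterS2 clipW_eq mZ.2 => w /(_ I) /= clipW_eq_w ZX.
have /andP[aY Yb] := Y_bnd w.
have W_bnd : a%:E <= W w <= b%:E.
  by rewrite le_max aY /= ge_max Yb (le_trans ZX (Xb w)).
move: clipW_eq_w; rewrite (clip_id (Y_bnd w)) (clip_id W_bnd).
move=> /(congr1 (fun x => x + a%:E)) /=; rewrite EFinN !subeK // => <-.
by rewrite le_max lexx orbT.
Qed.

Lemma is_essinf_bdd_exists : exists Y, is_essinf_bdd P F t X Y.
Proof.
have [Y [mY Y_bnd] Ymax] := mass_maximizer_exists.
exists Y; split; [exact: mY.1 | split; [exact: mY.2 |]].
by move=> Z LZ ZX; apply: minorant_le_mass_maximizer.
Qed.

End EssinfBounded.

Section Essinf.
Context (t : nat) (tT : (t <= T)%N).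

Lemma is_essinf_bdd_essinf_bdd (a b : R) (X : Omega -> \bar R) : (a <= b)%R ->
  (forall w, a%:E <= X w) -> (forall w, X w <= b%:E) ->
  is_essinf_bdd P F t X (essinf_bdd P F t X).
Proof. by move=> ab Xa Xb; exact: epsilon_spec (is_essinf_bdd_exists tT ab Xa Xb). Qed.

Lemma esssup_bdd_spec (a b : R) (X : Omega -> \bar R) : (a <= b)%R ->
  (forall w, a%:E <= X w) -> (forall w, X w <= b%:E) ->
  L0bar F t (esssup_bdd P F t X) /\ as_le P X (esssup_bdd P F t X).
Proof.
move=> ab Xa Xb.
have [LY [YX _]] :
    is_essinf_bdd P F t (fun v => - X v) (essinf_bdd P F t (fun v => - X v)).
  by apply: (is_essinf_bdd_essinf_bdd (a := - b) (b := - a)) => [|w|w];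
    rewrite ?lerN2 // EFinN leeN2.
split; last by apply: filterS YX => w; rewrite /esssup_bdd leeNr.
apply/(L0barP _ tT)/measurableT_comp => //; exact/(L0barP _ tT).
Qed.

Let is_essinf_bdd_trunc (m : Omega -> \bar R) (n : nat) :
  let X v := mine (maxe (m v) 0) n%:R%:E in
  is_essinf_bdd P F t X (essinf_bdd P F t X).
Proof.
exact: is_essinf_bdd_essinf_bdd (ler0n _ n)
  (fun w => clip_ge (m w) (ler0n _ n)) (fun w => clip_le 0 n%:R (m w)).
Qed.

Let esssup_bdd_trunc_spec (m : Omega -> \bar R) (n : nat) :
  let X v := mine (maxe (m v) 0) n%:R%:E in
  L0bar F t (esssup_bdd P F t X) /\ as_le P X (esssup_bdd P F t X).
Proof.
exact: esssup_bdd_spec (ler0n _ n)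
  (fun w => clip_ge (m w) (ler0n _ n)) (fun w => clip_le 0 n%:R (m w)).
Qed.

Lemma Essinf_L0bar (m : Omega -> \bar R) : L0bar F t (Essinf P F t m).
Proof.
apply/(L0barP _ tT)/emeasurable_funB; apply: measurable_fun_ereal_sup_range => n.
  exact/(L0barP _ tT)/(is_essinf_bdd_trunc m n).1.
exact/(L0barP _ tT)/(esssup_bdd_trunc_spec (fun v => - m v) n).1.
Qed.

Lemma Essinf_le (m : Omega -> \bar R) : as_le P (Essinf P F t m) m.
Proof.
have : \forall w \ae P, forall n,
    essinf_bdd P F t (fun v => mine (maxe (m v) 0) n%:R%:E) w
      <= mine (maxe (m w) 0) n%:R%:E.
  by apply: ae_foralln => n; exact: (is_essinf_bdd_trunc m n).2.1.
have : \forall w \ae P, forall n,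
    mine (maxe (- m w) 0) n%:R%:E
      <= esssup_bdd P F t (fun v => mine (maxe (- m v) 0) n%:R%:E) w.
  by apply: ae_foralln => n; exact: (esssup_bdd_trunc_spec (fun v => - m v) n).2.
apply: filterS2 => w neg_le pos_le.
rewrite /Essinf [in leRHS](funeposneg m) /= funeposE funenegE leeB //.
  apply: ge_ereal_sup => _ [n _ <-].
  by apply: le_trans (pos_le n) _; rewrite ge_min lexx.
exact: le_ereal_sup_mine.
Qed.

Lemma Esssup_L0bar (m : Omega -> \bar R) : L0bar F t (Esssup P F t m).
Proof.
by apply/(L0barP _ tT)/measurableT_comp => //; exact/(L0barP _ tT)/Essinf_L0bar.
Qed.

Lemma le_Esssup (m : Omega -> \bar R) : as_le P m (Esssup P F t m).
Proof. by apply: filterS (Essinf_le (fun v => - m v)) => w; rewrite /Esssup leeNr. Qed.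

End Essinf.
End Filtration.

Section ProjectiveUpdate.
Context d (Omega : measurableType d) (R : realType) (P : probability Omega R)
  (F : nat -> set (set Omega)) (T : nat) (hF : filtration F T) (p : pexp)
  (phi : nat -> (Omega -> R) -> (Omega -> \bar R))
  (mu : nat -> nat -> (Omega -> \bar R) -> (Omega -> R) -> (Omega -> \bar R))
  (mu_proj : projective P F T p mu).

Let L0bar_lt t s (m : Omega -> \bar R) : (t < s <= T)%N -> L0bar F t m -> L0bar F s m.
Proof. by case/andP=> /ltnW ts sT; apply: (L0bar_mono hF); rewrite ts. Qed.

Lemma projective_update_id t s m X : (t < s <= T)%N -> Lp P F T p X ->
  L0bar F t m -> as_eq P (mu t s m X) m.
Proof.
case: mu_proj => mut [_ [mu_mut mut_id]] tsT LX Lm.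
have tT : (t <= T)%N by case/andP: tsT => /ltnW; exact: leq_trans.
apply: filterS2 (mu_mut t s m X tsT (L0bar_lt tsT Lm) LX) (mut_id t m tT Lm).
by move=> w ->.
Qed.

Lemma mu_acc_tc_lower_bound : mu_acc_tc P F T p phi mu ->
  forall X t s m, (t < s <= T)%N -> Lp P F T p X -> L0bar F t m ->
  as_le P m (phi s X) -> as_le P m (phi t X).
Proof.
move=> acc X t s m tsT LX Lm m_le.
apply: filterS2 (acc X t s m tsT LX (L0bar_lt tsT Lm) m_le) (projective_update_id tsT LX Lm).
by move=> w + <-.
Qed.

Lemma mu_rej_tc_upper_bound : mu_rej_tc P F T p phi mu ->
  forall X t s m, (t < s <= T)%N -> Lp P F T p X -> L0bar F t m ->
  as_le P (phi s X) m -> as_le P (phi t X) m.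
Proof.
move=> rej X t s m tsT LX Lm le_m.
apply: filterS2 (rej X t s m tsT LX (L0bar_lt tsT Lm) le_m) (projective_update_id tsT LX Lm).
by move=> w + <-.
Qed.

End ProjectiveUpdate.

Theorem proposition4p5 (d : measure_display) (Omega : measurableType d)
  (R : realType) (P : probability Omega R) (F : nat -> set (set Omega))
  (T : nat) (p : pexp)
  (phi : nat -> (Omega -> R) -> (Omega -> \bar R))
  (mu : nat -> nat -> (Omega -> \bar R) -> (Omega -> R) -> (Omega -> \bar R)) :
  filtration F T ->
  dynamic_LM P F T p phi ->
  update_rule P F T p mu ->
  projective P F T p mu ->
  (mu_acc_tc P F T p phi mu -> weak_acc_tc P F T p phi) /\
  (mu_rej_tc P F T p phi mu -> weak_rej_tc P F T p phi).
Proof.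
move=> hF _ _ mu_proj.
split=> [acc | rej] X t s m tsT LX _ m_phi;
  have tT : (t <= T)%N by case/andP: tsT => /ltnW ts sT; exact: leq_trans ts sT.
- apply: (mu_acc_tc_lower_bound hF mu_proj acc tsT LX (Essinf_L0bar P hF tT m)).
  by apply: filterS2 (Essinf_le P hF tT m) m_phi => w; exact: le_trans.
- apply: (mu_rej_tc_upper_bound hF mu_proj rej tsT LX (Esssup_L0bar P hF tT m)).
  by apply: filterS2 m_phi (le_Esssup P hF tT m) => w; exact: le_trans.
Qed.
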